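(* Let $m\ge 2$ and let $\mathcal{R}_m^4$ be the rose graph with $N_m=3m+1$ nodes. For the maximal entropy random walk (MERW) on $\mathcal{R}_m^4$, the stationary probability of the hub node, of any internal node, and of any peripheral node are respectively $$\pi_{\mathrm H}^{\mathrm M}=\frac{m}{2m+2}=\frac{N_m-1}{2(N_m-1)+6},\qquad \pi_{\mathrm I}^{\mathrm M}=\frac{1}{4m}=\frac{3}{4(N_m-1)},\qquad \pi_{\mathrm P}^{\mathrm M}=\frac{1}{2m(m+1)}=\frac{9}{2(N_m+2)(N_m-1)}.$$
   Context: The rose graph $\mathcal{R}_m^4$ ($m\ge2$) is obtained by gluing $m$ cycles of length 4 at a single common node, the hub; it has $3m+1$ nodes. In each 4-cycle, the two neighbours of the hub are internal nodes and the node opposite the hub is the peripheral node. For a connected graph with adjacency matrix $\mathbf{A}=(a_{ij})$, let $\lambda_1$ be the largest eigenvalue of $\mathbf{A}$ and $\psi_1=(\psi_{11},\dots,\psi_{1N})$ the corresponding positive unit eigenvector. The MERW is the Markov chain on nodes with transition probabilities $p_{ij}=\frac{a_{ij}}{\lambda_1}\frac{\psi_{1j}}{\psi_{1i}}$; its stationary distribution is the probability vector $\pi$ with $\pi\mathbf{P}=\pi$. *)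

From HB Require Import structures.
From mathcomp Require Import all_boot all_order all_algebra.
From mathcomp Require Import all_reals.
Set Implicit Arguments. Unset Strict Implicit. Unset Printing Implicit Defensive.
Import Order.TTheory GRing.Theory Num.Theory.
Local Open Scope ring_scope.

(* Node labelling of the rose graph R_m^4 on 'I_(3m+1):
   node 0 is the hub; for k < m, the k-th 4-cycle is
   hub - (3k+1) - (3k+2) - (3k+3) - hub.
   So node i > 0 lies in cycle (i-1) %/ 3 at position (i-1) %% 3 in {0,1,2};
   positions 0 and 2 are the internal nodes (neighbours of the hub) and
   position 1 is the peripheral node. *)
Definition rose_pos (i : nat) : nat := ((i.-1) %% 3)%N.
Definition rose_cyc (i : nat) : nat := ((i.-1) %/ 3)%N.

Definition is_hub (i : nat) : bool := (i == 0)%N.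
Definition is_internal (i : nat) : bool := (0 < i)%N && (rose_pos i != 1)%N.
Definition is_peripheral (i : nat) : bool := (0 < i)%N && (rose_pos i == 1)%N.

Definition rose_edge (i j : nat) : bool :=
  [|| (is_hub i && is_internal j),
      (is_hub j && is_internal i)
    | [&& (0 < i)%N, (0 < j)%N, rose_cyc i == rose_cyc j &
          ((rose_pos i).+1 == rose_pos j) || ((rose_pos j).+1 == rose_pos i)]].

Definition rose_adj (R : realType) (m : nat) : 'M[R]_(3 * m + 1) :=
  \matrix_(i, j) (rose_edge i j)%:R.

Definition merw_P (R : realType) (n : nat) (A : 'M[R]_n) (lam : R)
  (psi : 'cV[R]_n) : 'M[R]_n :=
  \matrix_(i, j) (A i j / lam * (psi j 0 / psi i 0)).

Definition largest_eigenvalue (R : realType) (n : nat) (A : 'M[R]_n) (lam : R) :=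
  eigenvalue A lam /\ forall mu, eigenvalue A mu -> mu <= lam.

Definition pos_unit_eigvec (R : realType) (n : nat) (A : 'M[R]_n) (lam : R)
  (psi : 'cV[R]_n) :=
  A *m psi = lam *: psi /\ (forall i, 0 < psi i 0) /\ \sum_i (psi i 0) ^+ 2 = 1.

Definition stationary_dist (R : realType) (n : nat) (P : 'M[R]_n) (pi : 'rV[R]_n) :=
  (forall i, 0 <= pi 0 i) /\ \sum_i pi 0 i = 1 /\ pi *m P = pi.

From HB Require Import structures.
From mathcomp Require Import all_boot all_order all_algebra.
From mathcomp Require Import all_reals.
From mathcomp Require Import zify ring lra.
Import Order.TTheory GRing.Theory Num.Theory.
Set Implicit Arguments. Unset Strict Implicit. Unset Printing Implicit Defensive.
Local Open Scope ring_scope.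

(* Along a petal hub - a - p - b - hub the eigen-equations read lam a = h + p = lam b
   and lam p = a + b, so a = b, lam p = 2 a and (lam^2 - 2) a = lam h: when lam <> 0 and
   lam^2 <> 2, every lam-eigenvector of the adjacency matrix is determined by its hub
   value h.  For the positive eigenvector psi the hub equation lam h = 2 m a then forces
   lam^2 = 2 m + 2.  Since the adjacency matrix is symmetric, pi_i / psi_i is again a
   lam-eigenvector, hence proportional to psi, and the two normalisations give
   pi_i = psi_i^2, which is read off the profile of psi and its unit norm. *)

Local Ltac rose_lia :=
  rewrite /rose_edge /is_hub /is_internal /is_peripheral /rose_pos /rose_cyc; lia.

Lemma rose_edgeC i j : rose_edge i j = rose_edge j i.
Proof. rose_lia. Qed.

Lemma rose_edge_hub j : rose_edge 0 j = is_internal j.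
Proof. rose_lia. Qed.

Lemma rose_edge_first k j : rose_edge (3 * k + 1) j = (j == 0)%N || (j == 3 * k + 2)%N.
Proof. rose_lia. Qed.

Lemma rose_edge_middle k j :
  rose_edge (3 * k + 2) j = (j == 3 * k + 1)%N || (j == 3 * k + 3)%N.
Proof. rose_lia. Qed.

Lemma rose_edge_last k j : rose_edge (3 * k + 3) j = (j == 0)%N || (j == 3 * k + 2)%N.
Proof. rose_lia. Qed.

Lemma internal_first k : is_internal (3 * k + 1).
Proof. rose_lia. Qed.

Lemma peripheral_middle k : is_peripheral (3 * k + 2).
Proof. rose_lia. Qed.

Lemma internal_last k : is_internal (3 * k + 3).
Proof. rose_lia. Qed.

Lemma rose_node_cases m j : (0 < j < 3 * m + 1)%N ->
  exists2 k, (k < m)%N & [\/ j = 3 * k + 1, j = 3 * k + 2 | j = 3 * k + 3]%N.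
Proof.
move=> j_node; exists (rose_cyc j); first by rose_lia.
have : (rose_pos j = 0 \/ rose_pos j = 1 \/ rose_pos j = 2)%N by rose_lia.
by case=> [|[|]] pos_j; [apply: Or31 | apply: Or32 | apply: Or33]; move: pos_j; rose_lia.
Qed.

Definition rose_profile (T : Type) (x y z : T) (j : nat) : T :=
  if is_hub j then x else if is_internal j then y else z.

Section RoseProfile.
Variables (T : Type) (x y z : T).

Lemma rose_profile_hub j : is_hub j -> rose_profile x y z j = x.
Proof. by rewrite /rose_profile => ->. Qed.

Lemma rose_profile_internal j : is_internal j -> rose_profile x y z j = y.
Proof. by move=> j_int; rewrite /rose_profile j_int ifF //; move: j_int; rose_lia. Qed.

Lemma rose_profile_peripheral j : is_peripheral j -> rose_profile x y z j = z.
Proof.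
by move=> j_per; rewrite /rose_profile !ifF //; move: j_per; rose_lia.
Qed.

Lemma rose_profile_map (S : Type) (f : T -> S) j :
  f (rose_profile x y z j) = rose_profile (f x) (f y) (f z) j.
Proof. by rewrite /rose_profile; case: (is_hub j); case: (is_internal j). Qed.

End RoseProfile.

Lemma sum_rose_profile (V : nmodType) (x y z : V) n :
  \sum_(0 <= j < 3 * n + 1) rose_profile x y z j = x + y *+ (2 * n) + z *+ n.
Proof.
elim: n => [|n IH]; first by rewrite big_nat1 rose_profile_hub // muln0 !mulr0n !addr0.
have -> : (3 * n.+1 + 1 = (3 * n + 1).+3)%N by lia.
rewrite !big_nat_recr //= IH.
have -> : ((3 * n + 1).+1 = 3 * n + 2)%N by lia.
have -> : ((3 * n + 2).+1 = 3 * n + 3)%N by lia.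
rewrite rose_profile_internal ?internal_first // rose_profile_peripheral ?peripheral_middle //.
rewrite rose_profile_internal ?internal_last //.
have -> : (2 * n.+1 = (2 * n).+2)%N by lia.
by rewrite !mulrSr [LHS](ACl (1*2*4*6*3*5)%AC) !addrA.
Qed.

Lemma internal_mul_rose_profile (R : pzSemiRingType) (x y z : R) j :
  (is_internal j)%:R * rose_profile x y z j = rose_profile 0 y 0 j.
Proof.
rewrite /rose_profile; case: ifP => [hub_j|_]; last by case: ifP; rewrite ?mul1r ?mul0r.
have -> : is_internal j = false by move: hub_j; rose_lia.
by rewrite mul0r.
Qed.

Section VectorAtNat.
Variables (V : nmodType) (n : nat).

(* Entries of a column vector at natural-number indices, [0] out of range, so that
   node arithmetic such as [3 * k + 1] stays in [nat]. *)
Definition cv_at (v : 'cV[V]_n) (j : nat) : V :=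
  if insub j is Some i then v i 0 else 0.

Lemma cv_atE v (i : 'I_n) : cv_at v i = v i 0.
Proof. by rewrite /cv_at valK. Qed.

Lemma sum_cv_at (W : nmodType) (F : V -> W) (v : 'cV[V]_n) :
  \sum_(i < n) F (v i 0) = \sum_(0 <= j < n) F (cv_at v j).
Proof. by rewrite big_mkord; apply: eq_bigr => i _; rewrite cv_atE. Qed.

End VectorAtNat.

Lemma sum_nat_eq_mul (R : pzSemiRingType) n (f : nat -> R) a : (a < n)%N ->
  \sum_(0 <= j < n) (j == a)%:R * f j = f a.
Proof.
move=> a_lt_n; rewrite (bigD1_seq a) ?mem_index_iota ?iota_uniq //= eqxx mul1r.
by rewrite big1 ?addr0 // => j /negbTE ->; rewrite mul0r.
Qed.

Lemma sum_nat_eq2_mul (R : pzSemiRingType) n (f : nat -> R) a b :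
  (a < n)%N -> (b < n)%N -> a != b ->
  \sum_(0 <= j < n) ((j == a) || (j == b))%:R * f j = f a + f b.
Proof.
move=> a_lt_n b_lt_n neq_ab.
rewrite -(sum_nat_eq_mul f a_lt_n) -(sum_nat_eq_mul f b_lt_n) -big_split /=.
apply: eq_bigr => j _; case: (j =P a) => [->|_] /=.
  by rewrite (negbTE neq_ab) mul1r mul0r addr0.
by rewrite mul0r add0r.
Qed.

Lemma merw_stationary_eigvec (R : realType) n (A : 'M[R]_n) (lam : R)
  (psi : 'cV[R]_n) (pi : 'rV[R]_n) :
  A^T = A -> lam != 0 -> (forall i, psi i 0 != 0) ->
  pi *m merw_P A lam psi = pi ->
  A *m \col_i (pi 0 i / psi i 0) = lam *: \col_i (pi 0 i / psi i 0).
Proof.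
move=> A_sym lam_neq0 psi_neq0 pi_stat; apply/matrixP => i j; rewrite (ord1 j) !mxE.
have := congr1 (fun M : 'rV[R]_n => M 0 i) pi_stat; rewrite !mxE => pi_i.
have -> : \sum_k A i k * (\col_k (pi 0 k / psi k 0)) k 0 = lam / psi i 0 * pi 0 i.
  rewrite -pi_i mulr_sumr; apply: eq_bigr => k _.
  by rewrite !mxE -{1}A_sym mxE; field; rewrite !psi_neq0 lam_neq0.
by rewrite mulrAC -mulrA.
Qed.

Lemma rose_adj_sym (R : realType) m : (rose_adj R m)^T = rose_adj R m.
Proof. by apply/matrixP => i j; rewrite !mxE rose_edgeC. Qed.

Section RoseSpectrum.
Variables (R : realType) (m : nat).
Hypothesis m_gt0 : (0 < m)%N.
Local Notation N := (3 * m + 1)%N.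
Local Notation A := (rose_adj R m).

Section Eigenvector.
Variables (v : 'cV[R]_N) (lam : R).
Hypothesis v_eig : A *m v = lam *: v.
Local Notation v_ := (cv_at v).

Lemma rose_eigen_row i : (i < N)%N ->
  lam * v_ i = \sum_(0 <= j < N) (rose_edge i j)%:R * v_ j.
Proof.
move=> i_lt_N; have := congr1 (fun M : 'cV[R]_N => M (Ordinal i_lt_N) 0) v_eig.
rewrite !mxE (cv_atE v (Ordinal i_lt_N)) => <-.
by rewrite big_mkord; apply: eq_bigr => j _; rewrite !mxE cv_atE.
Qed.

Lemma rose_cycle_rows k : (k < m)%N -> [/\
  lam * v_ (3 * k + 1) = v_ 0 + v_ (3 * k + 2),
  lam * v_ (3 * k + 2) = v_ (3 * k + 1) + v_ (3 * k + 3) &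
  lam * v_ (3 * k + 3) = v_ 0 + v_ (3 * k + 2)].
Proof.
move=> k_lt_m; split; rewrite rose_eigen_row; try lia.
- by under eq_bigr do rewrite rose_edge_first; rewrite sum_nat_eq2_mul //; lia.
- by under eq_bigr do rewrite rose_edge_middle; rewrite sum_nat_eq2_mul //; lia.
- by under eq_bigr do rewrite rose_edge_last; rewrite sum_nat_eq2_mul //; lia.
Qed.

Lemma rose_hub_row : lam * v_ 0 = \sum_(0 <= j < N) (is_internal j)%:R * v_ j.
Proof. by rewrite rose_eigen_row ?addn1 //; under eq_bigr do rewrite rose_edge_hub. Qed.

Lemma rose_cycle_solve k : (k < m)%N -> lam != 0 -> [/\
  v_ (3 * k + 3) = v_ (3 * k + 1),
  lam * v_ (3 * k + 2) = 2 * v_ (3 * k + 1) &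
  (lam ^+ 2 - 2) * v_ (3 * k + 1) = lam * v_ 0].
Proof.
move=> k_lt_m lam_neq0; have [row1 row2 row3] := rose_cycle_rows k_lt_m.
have v31 : v_ (3 * k + 3) = v_ (3 * k + 1).
  by apply: (mulfI lam_neq0); rewrite row1 row3.
split => //; first by rewrite row2 v31; ring.
by rewrite mulrBl expr2 -mulrA row1 mulrDr row2 v31; ring.
Qed.

Lemma rose_eigvec_profile : lam != 0 -> lam ^+ 2 != 2 -> forall j, (j < N)%N ->
  v_ j = v_ 0 * rose_profile 1 (lam / (lam ^+ 2 - 2)) (2 / (lam ^+ 2 - 2)) j.
Proof.
move=> lam_neq0 lam2_neq2 j j_lt_N.
have d_neq0 : lam ^+ 2 - 2 != 0 by rewrite subr_eq0.
have [->|j_gt0] := posnP j; first by rewrite rose_profile_hub ?mulr1.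
have /rose_node_cases[k k_lt_m j_cases] : (0 < j < N)%N by lia.
have [v31 v2 v1] := rose_cycle_solve k_lt_m lam_neq0.
have v1E : v_ (3 * k + 1) = v_ 0 * (lam / (lam ^+ 2 - 2)).
  by apply: (mulfI d_neq0); rewrite v1; field.
case: j_cases => ->.
- by rewrite rose_profile_internal ?internal_first.
- rewrite rose_profile_peripheral ?peripheral_middle //.
  by apply: (mulfI lam_neq0); rewrite v2 v1E; field.
- by rewrite rose_profile_internal ?internal_last // v31.
Qed.

End Eigenvector.

Lemma rose_perron_root (psi : 'cV[R]_N) lam :
  pos_unit_eigvec A lam psi -> 0 < lam /\ lam ^+ 2 = 2 * m%:R + 2.
Proof.
case=> psi_eig [psi_gt0 _].
have pos j : (j < N)%N -> 0 < cv_at psi j.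
  by move=> j_lt_N; rewrite (cv_atE psi (Ordinal j_lt_N)).
have [v0_gt0 v1_gt0 v2_gt0] : [/\ 0 < cv_at psi 0, 0 < cv_at psi (3 * 0 + 1)
  & 0 < cv_at psi (3 * 0 + 2)] by split; apply: pos; lia.
have [row1 _ _] := rose_cycle_rows psi_eig m_gt0.
have lam_gt0 : 0 < lam by nra.
have [_ _ hub_rel] := rose_cycle_solve psi_eig m_gt0 (lt0r_neq0 lam_gt0).
have d_gt0 : 0 < lam ^+ 2 - 2 by nra.
have lam2_neq2 : lam ^+ 2 != 2 by rewrite -subr_eq0 lt0r_neq0.
have := rose_hub_row psi_eig.
under eq_big_nat => j /andP[_ j_lt_N].
  rewrite (rose_eigvec_profile psi_eig (lt0r_neq0 lam_gt0) lam2_neq2 j_lt_N).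
  rewrite mulrCA internal_mul_rose_profile.
over.
rewrite -mulr_sumr sum_rose_profile mul0rn add0r addr0 => hub_row; split => //.
have : (lam ^+ 2 - 2) * (lam * cv_at psi 0) = (2 * m)%:R * (lam * cv_at psi 0).
  by rewrite {1}hub_row -mulr_natr; field; rewrite lt0r_neq0.
by move/(mulIf (lt0r_neq0 (mulr_gt0 lam_gt0 v0_gt0))); rewrite natrM; lra.
Qed.

Lemma rose_merw_stationary_sq (psi : 'cV[R]_N) lam (pi : 'rV[R]_N) :
  pos_unit_eigvec A lam psi -> stationary_dist (merw_P A lam psi) pi ->
  forall i, pi 0 i = psi i 0 ^+ 2.
Proof.
move=> psi_pos [_ [pi_sum pi_stat]].
have [lam_gt0 lam2] := rose_perron_root psi_pos.
case: psi_pos => psi_eig [psi_gt0 psi_unit].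
have lam_neq0 := lt0r_neq0 lam_gt0.
have m_pos : 0 < m%:R :> R by rewrite ltr0n.
have lam2_neq2 : lam ^+ 2 != 2 by apply/eqP => lam2_eq; lra.
have psi_neq0 i : psi i 0 != 0 by rewrite lt0r_neq0.
have x_eig := merw_stationary_eigvec (rose_adj_sym R m) lam_neq0 psi_neq0 pi_stat.
set x := \col_i (pi 0 i / psi i 0) in x_eig.
have N_gt0 : (0 < N)%N by lia.
have h_neq0 : cv_at psi 0 != 0 by rewrite (cv_atE psi (Ordinal N_gt0)).
have pi_psi i : pi 0 i = cv_at x 0 / cv_at psi 0 * psi i 0 ^+ 2.
  have -> : pi 0 i = x i 0 * psi i 0 by rewrite mxE divfK.
  rewrite -!cv_atE (rose_eigvec_profile x_eig lam_neq0 lam2_neq2 (ltn_ord i)).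
  by rewrite (rose_eigvec_profile psi_eig lam_neq0 lam2_neq2 (ltn_ord i)); field.
have c_eq1 : cv_at x 0 / cv_at psi 0 = 1.
  by rewrite -pi_sum (eq_bigr _ (fun i _ => pi_psi i)) -mulr_sumr psi_unit mulr1.
by move=> i; rewrite pi_psi c_eq1 mul1r.
Qed.

Lemma rose_perron_sq (psi : 'cV[R]_N) lam : pos_unit_eigvec A lam psi ->
  forall i : 'I_N, psi i 0 ^+ 2 =
    rose_profile (m%:R / (2 * m%:R + 2)) (1 / (4 * m%:R)) (1 / (2 * m%:R * (m%:R + 1))) i.
Proof.
move=> psi_pos; have [lam_gt0 lam2] := rose_perron_root psi_pos.
case: psi_pos => psi_eig [_ psi_unit].
have m_pos : 0 < m%:R :> R by rewrite ltr0n.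
have lam2_neq2 : lam ^+ 2 != 2 by apply/eqP => lam2_eq; lra.
set h := cv_at psi 0; set a := lam / (lam ^+ 2 - 2); set b := 2 / (lam ^+ 2 - 2).
have psi_sq j : (j < N)%N ->
    cv_at psi j ^+ 2 = rose_profile (h ^+ 2) (h ^+ 2 * a ^+ 2) (h ^+ 2 * b ^+ 2) j.
  move=> j_lt_N; rewrite (rose_eigvec_profile psi_eig (lt0r_neq0 lam_gt0) lam2_neq2 j_lt_N).
  by rewrite exprMn (rose_profile_map _ _ _ (fun t => h ^+ 2 * t ^+ 2)) expr1n mulr1.
have h2_sum : h ^+ 2 * ((2 * m%:R + 2) / m%:R) = 1.
  rewrite -[RHS]psi_unit (sum_cv_at (fun t => t ^+ 2)).
  under eq_big_nat => j /andP[_ j_lt_N] do rewrite psi_sq //.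
  rewrite sum_rose_profile -[_ *+ (2 * m)]mulr_natr -[_ * b ^+ 2 *+ m]mulr_natr.
  rewrite /a /b !expr_div_n lam2 natrM.
  by field; rewrite !lt0r_neq0 //; lra.
have c_gt0 : 0 < (2 * m%:R + 2) / m%:R :> R by rewrite divr_gt0 //; lra.
have h2E : h ^+ 2 = m%:R / (2 * m%:R + 2).
  by apply: (mulIf (lt0r_neq0 c_gt0)); rewrite h2_sum; field; rewrite !lt0r_neq0 //; lra.
move=> i; rewrite -cv_atE psi_sq // h2E /a /b !expr_div_n lam2.
by congr (rose_profile _ _ _ _); field; rewrite !lt0r_neq0 //; lra.
Qed.

End RoseSpectrum.

Theorem theorem5 (R : realType) (m : nat) (hm : (2 <= m)%N)
  (lam : R) (psi : 'cV[R]_(3 * m + 1)) (pi : 'rV[R]_(3 * m + 1)) :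
  largest_eigenvalue (rose_adj R m) lam ->
  pos_unit_eigvec (rose_adj R m) lam psi ->
  stationary_dist (merw_P (rose_adj R m) lam psi) pi ->
  let N : R := (3 * m + 1)%:R in
  (forall i : 'I_(3 * m + 1), is_hub i ->
     pi 0 i = m%:R / (2 * m%:R + 2) /\ pi 0 i = (N - 1) / (2 * (N - 1) + 6)) /\
  (forall i : 'I_(3 * m + 1), is_internal i ->
     pi 0 i = 1 / (4 * m%:R) /\ pi 0 i = 3 / (4 * (N - 1))) /\
  (forall i : 'I_(3 * m + 1), is_peripheral i ->
     pi 0 i = 1 / (2 * m%:R * (m%:R + 1)) /\
     pi 0 i = 9 / (2 * (N + 2) * (N - 1))).
Proof.
(* The positive eigenvector alone pins down lam. *)
move=> _ psi_pos pi_stat N.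
have m_gt0 : (0 < m)%N := ltnW hm.
have pi_val i : pi 0 i = rose_profile (m%:R / (2 * m%:R + 2)) (1 / (4 * m%:R))
    (1 / (2 * m%:R * (m%:R + 1))) i.
  by rewrite (rose_merw_stationary_sq m_gt0 psi_pos pi_stat) (rose_perron_sq m_gt0 psi_pos).
have m_pos : 0 < m%:R :> R by rewrite ltr0n.
have -> : N = 3 * m%:R + 1 by rewrite /N natrD natrM.
split; [|split] => i node_i; rewrite pi_val.
- by rewrite rose_profile_hub //; split => //; field; rewrite !lt0r_neq0 //; lra.
- by rewrite rose_profile_internal //; split => //; field; rewrite !lt0r_neq0 //; lra.
- by rewrite rose_profile_peripheral //; split => //; field; rewrite !lt0r_neq0 //; lra.
Qed.
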